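(* Let $B$ be a board and $S$ a set of sinks such that every region of $B$ contains a sink, and let $T$ be a minimum-weight arborescence (converging to the root $r$) of the extended large tilt graph $\hat G_L(B,S)$. If $T$ contains two distinct inverse edges $(p_1,q)$ and $(p_2,q)$ with common head $q$, then $q$ is a sink.
   Context: Pixels are unit squares indexed by $\mathbb{Z}^2$. A board $B=(V,E)$ is a finite subgraph of the square grid graph on $\mathbb{Z}^2$; regions are its connected components; its boundary consists of pixel sides not shared with a neighbouring pixel joined by an edge of $E$. $S\subseteq V$ are sinks. For a pixel $p$, its row (column) segment is the maximal set of pixels reachable from $p$ using only horizontal (vertical) edges of $E$; $p^\ell,p^r$ are the leftmost/rightmost pixels of its row segment and $p^u,p^d$ the topmost/bottommost pixels of its column segment. The full tilt graph $G_F(B)$ has vertex set $V$ and edges $(p,p^x)$ for $x\in\{\ell,r,u,d\}$, $p^x\ne p$. A corner pixel is a pixel $p$ with $p=p^x=p^y$ for some $x\in\{\ell,r\}$, $y\in\{u,d\}$. The large tilt graph $G_L(B,S)$ is the subgraph of $G_F(B)$ induced by the vertex set consisting of (i) all pixels reachable in $G_F(B)$ from corner pixels, (ii) every sink $s$ and $s^\ell,s^r,s^u,s^d$, (iii) for every reflex corner of the boundary, the endpoints of the row and column segments of the pixels incident to that corner, (iv) all pixels on the intersection of a row segment and a column segment each containing a pixel included in (i)–(iii). Extended graph: for a directed graph $G$ with sinks $S$, $\hat G$ has vertex set $V(G)\cup\{r\}$ with new root $r$ and edges: every edge of $G$ with weight $0$; for every edge $(p,q)$ of $G$ such that $(q,p)$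 is not an edge of $G$, the inverse edge $(q,p)$ with weight $1$; and $(s,r)$ with weight $0$ for each $s\in S$. An arborescence converging to $r$ is a spanning subgraph in which every vertex other than $r$ has exactly one outgoing edge and a directed path to $r$; its weight is the sum of its edge weights. *)

From mathcomp Require Import all_boot all_order all_algebra.
Set Implicit Arguments. Unset Strict Implicit. Unset Printing Implicit Defensive.
Import Order.TTheory GRing.Theory Num.Theory.

(* A board: the pixel set is a finite type [T] embedded injectively in Z^2 by
   [pos] (pixel at (x,y) is the unit square [x,x+1]x[y,y+1]; y grows upward),
   and [E : rel T] is the (symmetric) edge relation, whose edges join
   grid-adjacent pixels. *)

Section Tilt.
Local Open Scope ring_scope.

Variable T : finType.
Variable pos : T -> int * int.
Variable E : rel T.

Definition xc (p : T) : int := (pos p).1.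
Definition yc (p : T) : int := (pos p).2.

Definition grid_adj (a b : int * int) : bool :=
  ((a.1 == b.1) && ((a.2 - b.2 == 1) || (b.2 - a.2 == 1))) ||
  ((a.2 == b.2) && ((a.1 - b.1 == 1) || (b.1 - a.1 == 1))).

Definition is_board : Prop :=
  injective pos /\ symmetric E /\ (forall p q, E p q -> grid_adj (pos p) (pos q)).

Definition hE : rel T := fun p q => E p q && (yc p == yc q).
Definition vE : rel T := fun p q => E p q && (xc p == xc q).

Definition rowseg (p : T) : {set T} := [set q | connect hE p q].
Definition colseg (p : T) : {set T} := [set q | connect vE p q].

Definition isL (p q : T) : bool :=
  (q \in rowseg p) && [forall q' in rowseg p, xc q <= xc q'].
Definition isR (p q : T) : bool :=
  (q \in rowseg p) && [forall q' in rowseg p, xc q' <= xc q].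
Definition isU (p q : T) : bool :=
  (q \in colseg p) && [forall q' in colseg p, yc q' <= yc q].
Definition isD (p q : T) : bool :=
  (q \in colseg p) && [forall q' in colseg p, yc q <= yc q'].

Definition tiltTo (p q : T) : bool := [|| isL p q, isR p q, isU p q | isD p q].

Definition GF : rel T := fun p q => (p != q) && tiltTo p q.

Definition corner_pixel (p : T) : bool := (isL p p || isR p p) && (isU p p || isD p p).

Definition openc (c1 c2 : int * int) : bool :=
  [exists p, exists q, [&& pos p == c1, pos q == c2 & E p q]].

(* Its four incident cells are
   Q0=(a,b), Q1=(a-1,b), Q2=(a-1,b-1), Q3=(a,b-1) (cyclic order); the unit
   side between consecutive cells Qi, Qi+1 is not a boundary side iff hi.
   v is a reflex corner iff some boundary side meets v and some three
   consecutive cells around v are joined through non-boundary sides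
   (i.e. the boundary at v encloses an angle of at least 270 degrees). *)
Definition reflex_corner (v : int * int) : bool :=
  let a := v.1 in let b := v.2 in
  let Q0 := (a, b) in let Q1 := (a - 1, b) in
  let Q2 := (a - 1, b - 1) in let Q3 := (a, b - 1) in
  let h0 := openc Q0 Q1 in let h1 := openc Q1 Q2 in
  let h2 := openc Q2 Q3 in let h3 := openc Q3 Q0 in
  ~~ [&& h0, h1, h2 & h3] && [|| h0 && h1, h1 && h2, h2 && h3 | h3 && h0].

Definition cornersOf (c : int * int) : seq (int * int) :=
  [:: c; (c.1 + 1, c.2); (c.1, c.2 + 1); (c.1 + 1, c.2 + 1)].

Variable S : {set T}.

Definition W0 : {set T} :=
  [set p | [|| [exists c, corner_pixel c && connect GF c p],
              (p \in S) || [exists s in S, tiltTo s p]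
            | [exists u, has reflex_corner (cornersOf (pos u)) && tiltTo u p]]].

Definition WL : {set T} :=
  W0 :|: [set p | [exists a in W0, exists b in W0,
                     (p \in rowseg a) && (p \in colseg b)]].

Definition GL : rel T := fun p q => [&& p \in WL, q \in WL & GF p q].

Definition invE (a c : T) : bool := GL c a && ~~ GL a c.

(* edges of the extended graph hat G_L; the root r is [None] *)
Definition hatE (a : T) (b : option T) : bool :=
  (a \in WL) && (if b is Some c then GL a c || invE a c else a \in S).

Definition hatw (a : T) (b : option T) : nat :=
  if b is Some c then (if GL a c then 0%N else 1%N) else 0%N.

(* a spanning subgraph in which every non-root vertex has exactly one outgoing
   edge is given by its successor function f (only values on WL matter) *)
Definition treeRel (f : T -> option T) : rel (option T) :=
  fun a b => if a is Some x then (x \in WL) && (b == f x) else false.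

Definition is_arborescence (f : T -> option T) : bool :=
  [forall v in WL, hatE v (f v)] &&
  [forall v in WL, connect (treeRel f) (Some v) None].

Definition arb_weight (f : T -> option T) : nat := (\sum_(v in WL) hatw v (f v))%N.

End Tilt.

From mathcomp Require Import all_boot all_order all_algebra.
Set Implicit Arguments. Unset Strict Implicit. Unset Printing Implicit Defensive.

(* If the tree edge of a vertex p is an inverse edge p -> q, then every
   out-neighbour c of p in G_L lies in the subtree of p: otherwise redirecting
   p to c would give a lighter arborescence.  Now q tilts to p1 and to p2,
   each along its row or its column segment.  If both lie on the same segment,
   p1 tilts to p2, so p2, and hence q, lies in the subtree of p1: a cycle.
   Otherwise q is an endpoint of neither of its segments (else p_i would tilt
   back to q).  Then no edge of G_L enters q, and an edge q -> c of G_L ends at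
   an endpoint of one of these segments, to which p1 or p2 tilts; then q lies
   in the subtree of that p_i, again a cycle.  So the tree edge of q goes to
   the root, i.e. q is a sink. *)

Section FunctionalRelation.
Variables (U : finType) (e : rel U).
Hypothesis e_fun : forall x y y', e x y -> e x y' -> y = y'.

Lemma connect_fun_step x y z : e x y -> connect e x z -> x != z -> connect e y z.
Proof.
move=> exy /connectP[[|x' s] /= xs ->]; first by rewrite eqxx.
case/andP: xs => exx' xs _; rewrite (e_fun exy exx').
by apply/connectP; exists s.
Qed.

Lemma connect_fun_cycle x y z :
  e x y -> connect e y x -> connect e x z -> connect e z x.
Proof.
move=> exy yx /connectP[s xs ->] {z}.
suff back_to_x v : path e v s -> connect e v x -> connect e (last v s) x.
  exact: back_to_x xs (connect0 e x).
elim: s v {xs} => [|w s IHs] v //= /andP[evw ws] vx; apply: IHs ws _.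
have [exv | nvx] := eqVneq v x; first by rewrite exv in evw; rewrite (e_fun evw exy).
exact: connect_fun_step evw vx nvx.
Qed.

Lemma connect_fun_sink x y z :
  (forall w, ~~ e z w) -> e x y -> connect e y x -> ~ connect e x z.
Proof.
move=> zsink exy yx xz.
have /connectP[[|w s] /= zs ezx] := connect_fun_cycle exy yx xz.
  by move: (zsink y); rewrite -ezx exy.
by case/andP: zs; rewrite (negbTE (zsink w)).
Qed.

End FunctionalRelation.

Lemma connect_redirect (U : finType) (e e' : rel U) p x z :
  (forall a b, a != p -> e a b -> e' a b) ->
  connect e x z -> connect e' x z \/ connect e' x p.
Proof.
move=> ee' /connectP[s xs ->] {z}.
elim: s x xs => [|y s IHs] x /=; first by left; apply: connect0.
case/andP=> exy /IHs; have [-> _ | nxp] := eqVneq x p; first by right; apply: connect0.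
have x'y : connect e' x y by apply/connect1/ee'.
by case=> ?; [left | right]; apply: connect_trans x'y _.
Qed.

Section Arborescence.
Variables (T : finType) (pos : T -> int * int) (E : rel T) (S : {set T}).
Local Notation WL := (WL pos E S).
Local Notation GL := (GL pos E S).
Local Notation tR := (treeRel pos E S).
Local Notation is_arb := (is_arborescence pos E S).
Local Notation weight := (arb_weight pos E S).
Local Notation hatw := (hatw pos E S).

Lemma treeRel_fun f a b b' : tR f a b -> tR f a b' -> b = b'.
Proof. by case: a => // a /andP[_ /eqP ->] /andP[_ /eqP ->]. Qed.

Lemma arborescence_edge f v : is_arb f -> v \in WL -> hatE pos E S v (f v).
Proof. by case/andP=> /forall_inP + _; apply. Qed.

Lemma arborescence_connect f v :
  is_arb f -> v \in WL -> connect (tR f) (Some v) None.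
Proof. by case/andP=> _ /forall_inP; apply. Qed.

Lemma arborescence_acyclic f p q :
  is_arb f -> p \in WL -> f p = Some q -> ~ connect (tR f) (Some q) (Some p).
Proof.
move=> f_arb pW fp qp; have pq : tR f (Some p) (Some q) by rewrite /treeRel pW fp /=.
have root_sink b : ~~ tR f None b by [].
exact: (connect_fun_sink (@treeRel_fun f) root_sink pq qp
          (arborescence_connect f_arb pW)).
Qed.

Definition redirect (f : T -> option T) (p c : T) : T -> option T :=
  fun x => if x == p then Some c else f x.

Lemma redirect_other f p c x : x != p -> redirect f p c x = f x.
Proof. by rewrite /redirect => /negbTE->. Qed.

Lemma redirect_arborescence f p c :
  is_arb f -> p \in WL -> GL p c -> ~ connect (tR f) (Some c) (Some p) ->
  is_arb (redirect f p c).
Proof.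
move=> f_arb pW Gpc ncp; set g := redirect f p c.
have cW : c \in WL by case/and3P: Gpc.
have agree f1 f2 : (forall x, x != p -> f1 x = f2 x) ->
    forall a b, a != Some p -> tR f1 a b -> tR f2 a b.
  by move=> f12 [x|] b // xp; rewrite /treeRel f12 // -(inj_eq Some_inj).
have fg := agree f g (fun x xp => esym (redirect_other f c xp)).
apply/andP; split; apply/forall_inP => v vW.
  rewrite /g /redirect; case: eqP => [-> | _]; last exact: arborescence_edge.
  by rewrite /hatE pW Gpc.
have [//|vp] := connect_redirect fg (arborescence_connect f_arb vW).
have gpc : tR g (Some p) (Some c) by rewrite /treeRel pW /g /redirect !eqxx.
apply: connect_trans vp (connect_trans (connect1 gpc) _).
have [//|cp] := connect_redirect fg (arborescence_connect f_arb cW).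
have gf := agree g f (fun x xp => redirect_other f c xp).
by case: (connect_redirect gf cp).
Qed.

Lemma arb_weight_redirect f p c : p \in WL ->
  (weight (redirect f p c) + hatw p (f p) = weight f + hatw p (Some c))%N.
Proof.
move=> pW; rewrite /arb_weight (bigD1 p pW) [in RHS](bigD1 p pW).
rewrite (eq_bigr (fun v => hatw v (f v))) => [|v /andP[_ vp]]; last first.
  by rewrite redirect_other.
by rewrite {1}/redirect eqxx /= addnAC [RHS]addnAC [hatw p (f p) + _]addnC.
Qed.

Lemma min_arborescence_inverse_subtree f p q c :
  is_arb f -> (forall g, is_arb g -> weight f <= weight g)%N ->
  p \in WL -> f p = Some q -> invE pos E S p q -> GL p c ->
  connect (tR f) (Some c) (Some p).
Proof.
move=> f_arb f_min pW fp /andP[_ nGpq] Gpc; apply/idPn => /negP ncp.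
have := f_min _ (redirect_arborescence f_arb pW Gpc ncp).
rewrite -(leq_add2r (hatw p (f p))) arb_weight_redirect // fp /hatw.
by rewrite (negbTE nGpq) Gpc addn0 addn1 ltnn.
Qed.

End Arborescence.

Section Segments.
Variables (T : finType) (pos : T -> int * int) (E : rel T).
Hypothesis symE : symmetric E.

Definition row_extreme (q : T) : bool := isL pos E q q || isR pos E q q.
Definition col_extreme (q : T) : bool := isU pos E q q || isD pos E q q.

Definition segment (b : bool) : T -> {set T} :=
  if b then colseg pos E else rowseg pos E.
Definition extreme (b : bool) : pred T := if b then col_extreme else row_extreme.
Definition segment_rel (b : bool) : rel T := if b then vE pos E else hE pos E.

Lemma segment_connect_sym b : connect_sym (segment_rel b).
Proof. by apply: sym_connect_sym; case: b => x y /=; rewrite /vE /hE symE eq_sym. Qed.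

Lemma segmentE b p : segment b p = [set q | connect (segment_rel b) p q].
Proof. by case: b. Qed.

Lemma segment_sym b p q : (q \in segment b p) = (p \in segment b q).
Proof. by rewrite !segmentE !inE segment_connect_sym. Qed.

Lemma segment_eq b p q : q \in segment b p -> segment b q = segment b p.
Proof.
rewrite !segmentE inE => pq; apply/setP => z; rewrite !inE.
by rewrite (same_connect (segment_connect_sym b) pq).
Qed.

Lemma tiltToE p q :
  tiltTo pos E p q = [|| (q \in rowseg pos E p) && row_extreme q
                       | (q \in colseg pos E p) && col_extreme q].
Proof.
have rowseg_eq x y : y \in rowseg pos E x -> rowseg pos E y = rowseg pos E x.
  exact: (@segment_eq false).
have colseg_eq x y : y \in colseg pos E x -> colseg pos E y = colseg pos E x.
  exact: (@segment_eq true).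
rewrite /tiltTo /row_extreme /col_extreme /isL /isR /isU /isD.
case Hr: (q \in rowseg pos E p); case Hc: (q \in colseg pos E p) => /=.
all: by rewrite ?(rowseg_eq _ _ Hr) ?(colseg_eq _ _ Hc) ?Hr ?Hc /= ?orbA ?orbF.
Qed.

Lemma tiltToP p q :
  reflect (exists b, q \in segment b p /\ extreme b q) (tiltTo pos E p q).
Proof.
rewrite tiltToE; apply: (iffP orP) => [[] /andP[qs ext] | [[] [qs ext]]].
- by exists false.
- by exists true.
- by right; apply/andP.
- by left; apply/andP.
Qed.

End Segments.

Section InverseTreeEdges.
Variables (T : finType) (pos : T -> int * int) (E : rel T) (S : {set T}).
Hypothesis symE : symmetric E.
Variable f : T -> option T.
Hypothesis f_arb : is_arborescence pos E S f.
Hypothesis f_min : forall g, is_arborescence pos E S g ->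
  (arb_weight pos E S f <= arb_weight pos E S g)%N.

Local Notation WL := (WL pos E S).
Local Notation GL := (GL pos E S).
Local Notation tR := (treeRel pos E S f).
Local Notation segment := (segment pos E).
Local Notation extreme := (extreme pos E).

Definition inverse_tree_edge (p q : T) : bool :=
  [&& p \in WL, f p == Some q & invE pos E S p q].

Lemma inverse_tree_edge_tilt p q : inverse_tree_edge p q ->
  [/\ q \in WL, tiltTo pos E q p & ~~ tiltTo pos E p q].
Proof.
case/and3P=> pW _ /andP[/and3P[qW _ /andP[qp tqp]] nGpq]; split=> //.
by apply: contra nGpq => tpq; rewrite /GL /GF pW qW eq_sym qp tpq.
Qed.

Lemma inverse_tree_edge_acyclic p q :
  inverse_tree_edge p q -> ~ connect tR (Some q) (Some p).
Proof. by case/and3P=> pW /eqP fp _; apply: arborescence_acyclic. Qed.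

Lemma inverse_tree_edge_not_extreme p q b :
  inverse_tree_edge p q -> p \in segment b q -> ~~ extreme b q.
Proof.
case/inverse_tree_edge_tilt=> _ _ ntpq pq; apply: contra ntpq => ext.
by apply/tiltToP => //; exists b; rewrite segment_sym.
Qed.

Lemma inverse_tree_edge_segment_reach p q b c :
  inverse_tree_edge p q -> p \in segment b q ->
  c \in WL -> c \in segment b q -> extreme b c -> connect tR (Some c) (Some p).
Proof.
move=> epq pq cW cq ext; have [-> | ncp] := eqVneq c p; first exact: connect0.
case/and3P: (epq) => pW /eqP fp ipq.
apply: (min_arborescence_inverse_subtree f_arb f_min pW fp ipq).
rewrite /GL /GF pW cW eq_sym ncp /=; apply/tiltToP => //; exists b.
by rewrite (segment_eq symE pq).
Qed.

Lemma inverse_tree_edges_aligned p1 p2 q b : p1 != p2 ->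
  inverse_tree_edge p1 q -> inverse_tree_edge p2 q ->
  p1 \in segment b q -> p2 \in segment b q -> extreme b p2 -> False.
Proof.
move=> n12 e1 e2 s1 s2 x2; apply: (inverse_tree_edge_acyclic e1).
case/and3P: (e2) => p2W /eqP f2 _.
have p2q : tR (Some p2) (Some q) by rewrite /treeRel p2W f2 /=.
apply: (connect_fun_step (@treeRel_fun _ _ _ _ f) p2q); last by rewrite eq_sym.
exact: inverse_tree_edge_segment_reach e1 s1 p2W s2 x2.
Qed.

Lemma inverse_tree_edges_crossed p1 p2 q b :
  inverse_tree_edge p1 q -> inverse_tree_edge p2 q ->
  p1 \in segment b q -> p2 \in segment (~~ b) q -> q \in S.
Proof.
move=> e1 e2 s1 s2.
have on_axis b' : exists2 p, inverse_tree_edge p q & p \in segment b' q.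
  by case: b' b s1 s2 => [] [] s1 s2; [exists p1 | exists p2 | exists p2 | exists p1].
have not_extreme b' : ~~ extreme b' q.
  by have [p epq pq] := on_axis b'; apply: inverse_tree_edge_not_extreme epq pq.
have [qW _ _] := inverse_tree_edge_tilt e1.
move: (arborescence_edge f_arb qW); rewrite /hatE qW /=.
case fq: (f q) => [c|] // /orP[/and3P[_ cW /andP[_ tqc]] | /andP[/and3P[_ _ Gcq] _]].
  have [b' [cq ext]] := tiltToP pos symE q c tqc.
  have [p epq pq] := on_axis b'.
  case: (inverse_tree_edge_acyclic epq).
  apply: connect_trans (connect1 _) (inverse_tree_edge_segment_reach epq pq cW cq ext).
  by rewrite /treeRel qW fq /=.
case/andP: Gcq => _ /(tiltToP pos symE)[b' [_ ext]].
by move: (not_extreme b'); rewrite ext.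
Qed.

End InverseTreeEdges.

Theorem mainTheorem7 (T : finType) (pos : T -> int * int) (E : rel T) (S : {set T}) :
  is_board pos E ->
  (forall p : T, exists2 s, s \in S & connect E p s) ->
  forall f : T -> option T,
  is_arborescence pos E S f ->
  (forall g : T -> option T, is_arborescence pos E S g ->
     (arb_weight pos E S f <= arb_weight pos E S g)%N) ->
  forall p1 p2 q : T, p1 != p2 ->
  p1 \in WL pos E S -> p2 \in WL pos E S ->
  f p1 = Some q -> f p2 = Some q ->
  invE pos E S p1 q -> invE pos E S p2 q ->
  q \in S.
Proof.
(* The sink hypothesis only ensures that arborescences exist. *)
move=> [_ [symE _]] _ f f_arb f_min p1 p2 q n12 p1W p2W f1 f2 i1 i2.
have e1 : inverse_tree_edge pos E S f p1 q by rewrite /inverse_tree_edge p1W f1 eqxx.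
have e2 : inverse_tree_edge pos E S f p2 q by rewrite /inverse_tree_edge p2W f2 eqxx.
have [_ /(tiltToP pos symE)[b1 [s1 _]] _] := inverse_tree_edge_tilt e1.
have [_ /(tiltToP pos symE)[b2 [s2 x2]] _] := inverse_tree_edge_tilt e2.
have [eb | nb] := eqVneq b2 b1.
  rewrite eb in s2 x2.
  by case: (inverse_tree_edges_aligned symE f_arb f_min n12 e1 e2 s1 s2 x2).
have s2' : p2 \in segment pos E (~~ b1) q by case: b1 b2 nb {s1 x2} s2 => [] [].
exact: (inverse_tree_edges_crossed symE f_arb f_min e1 e2 s1 s2').
Qed.
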